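(* Let $b\in\{0,1\}^d$ and let $q$ be the effective gradient associated with $b$. Then $H_{b'}(q)\ge 0$ (equivalently $N_{b'}(q)\le 1$) for every bitmap $b'\ge b$.
   Context: Jackson network with a tree topology on nodes $\{1,\dots,d\}$, root node $1$; $i\to j$ means node $j$ is a child of node $i$. Customers arrive from outside only at node $1$, with rate $\lambda>0$. For $i\to j$, $\mu_{i,j}>0$ is the rate at which node $i$ serves customers and sends them to node $j$; $\mu_{i,0}\ge 0$ is the rate at which node $i$ serves customers who then leave the system. Let $\mu_i=\sum_{k:i\to k}\mu_{i,k}+\mu_{i,0}>0$. Arrival rates: $\Lambda_1=\lambda$ and $\Lambda_j=\Lambda_i\mu_{i,j}/\mu_i$ if $i\to j$. Utilities $\rho_i=\Lambda_i/\mu_i$, assumed to satisfy $\max_i\rho_i<1$; also $\lambda+\sum_i\mu_i=1$. Let $\mu'_{i,0}=\Lambda_i\mu_{i,0}/\mu_i$. A bitmap $b\in\{0,1\}^d$ encodes which nodes are nonempty ($b(i)=1$) or empty ($b(i)=0$); $b'\ge b$ means $b'(i)\ge b(i)$ for all $i$. For a bitmap $b$ and $q\in\mathbb{R}^d$: $N_b(q)=\lambda e^{-q(1)/2}+\sum_{i:b(i)=1}\sum_{j:i\to j}\mu_{i,j}e^{(q(i)-q(j))/2}+\sum_{i:b(i)=1}\mu_{i,0}e^{q(i)/2}+\sum_{i:b(i)=0}\mu_i$, and $H_b(q)=-2\log N_b(q)$. Effective rates (recursively from the leaves): $M_i(b)=\mu_i$ if $b(i)=1$, and $M_i(b)=\min\big(\mu_i,\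 \sum_{k:i\to k}M_k(b)+\mu'_{i,0}\big)$ if $b(i)=0$. The effective gradient of $b$ is $q$ with $q(i)=2\log(\Lambda_i/M_i(b))$. *)

From Stdlib Require Import Reals Lra Arith.
Open Scope R_scope.

(* Nodes are the naturals 1..d; node 1 is the root.  The tree is given by a
   parent function [par] : for 2 <= j <= d, [par j] is the unique i with i -> j.
   Rates: [mu i j] = mu_{i,j} for an edge i -> j, and [mu i 0] = mu_{i,0}
   (index 0 is the "outside", not a node). *)

Fixpoint sumR (f : nat -> R) (n : nat) : R :=
  match n with
  | O => 0
  | S m => sumR f m + f (S m)
  end.

Definition is_child (par : nat -> nat) (i k : nat) : bool :=
  (2 <=? k)%nat && Nat.eqb (par k) i.

Definition mutot (d : nat) (par : nat -> nat) (mu : nat -> nat -> R) (i : nat) : R :=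
  sumR (fun k => if is_child par i k then mu i k else 0) d + mu i 0%nat.

(* Lambda_j computed from the root, with fuel (path to root has < d edges) *)
Fixpoint Lam_fuel (fuel : nat) (d : nat) (par : nat -> nat) (lam : R)
    (mu : nat -> nat -> R) (j : nat) : R :=
  if Nat.eqb j 1 then lam else
  match fuel with
  | O => 0
  | S n => Lam_fuel n d par lam mu (par j) * mu (par j) j / mutot d par mu (par j)
  end.

Definition Lam d par lam mu (j : nat) : R := Lam_fuel d d par lam mu j.

Definition rho d par lam mu (i : nat) : R := Lam d par lam mu i / mutot d par mu i.

Definition mu'0 d par lam mu (i : nat) : R :=
  Lam d par lam mu i * mu i 0%nat / mutot d par mu i.

(* effective rates M_i(b), computed from the leaves, with fuel (height < d) *)
Fixpoint M_fuel (fuel : nat) (d : nat) (par : nat -> nat) (lam : R)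
    (mu : nat -> nat -> R) (b : nat -> bool) (i : nat) : R :=
  if b i then mutot d par mu i else
  match fuel with
  | O => mutot d par mu i
  | S n => Rmin (mutot d par mu i)
             (sumR (fun k => if is_child par i k then M_fuel n d par lam mu b k else 0) d
              + mu'0 d par lam mu i)
  end.

Definition Meff d par lam mu b (i : nat) : R := M_fuel d d par lam mu b i.

Definition eff_grad d par lam mu b (i : nat) : R :=
  2 * ln (Lam d par lam mu i / Meff d par lam mu b i).

Definition Nb d par lam (mu : nat -> nat -> R) (b : nat -> bool) (q : nat -> R) : R :=
  lam * exp (- q 1%nat / 2)
  + sumR (fun i => if b i then
            sumR (fun j => if is_child par i j then mu i j * exp ((q i - q j) / 2) else 0) d
          else 0) d
  + sumR (fun i => if b i then mu i 0%nat * exp (q i / 2) else 0) d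
  + sumR (fun i => if b i then 0 else mutot d par mu i) d.

Definition Hb d par lam mu b q : R := -2 * ln (Nb d par lam mu b q).

From Stdlib Require Import Reals Arith Lra Lia List Wf_nat Classical.
Open Scope R_scope.

(* Write L_i = Lambda_i and M_i = M_i(b).  Since L_i <= mu_i and flows are
   conserved (L_i = sum_{i->k} L_k + mu'_{i,0}), induction from the leaves
   gives L_i <= M_i, so the effective gradient satisfies e^{q(i)/2} = L_i/M_i.
   Substituting, every term of N_b'(q) becomes explicit: the arrival term is
   M_1, and a node i nonempty in b' contributes (mu_i/M_i) S_i, where
   S_i = sum_{i->k} M_k + mu'_{i,0} is the rate offered by its subtree, while
   an empty node contributes mu_i.  Since M_i = min(mu_i, S_i) (or mu_i), each
   such contribution is at most mu_i + S_i - M_i, provided b' >= b.  Summing,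
   each M_k (k non-root) cancels against its parent's S, the exit flows add
   up to lam, and N_b'(q) <= lam + sum_i mu_i = 1, i.e. H_b'(q) >= 0.
   The file first develops finite sums and the combinatorics of the tree
   (depth bound, leaf-to-root induction, sums over parent-child pairs), then
   the recursive equations behind the fuel-based definitions of Lambda and
   M(b), then the network estimates, and finally the theorem. *)

Lemma sumR_ext (f g : nat -> R) (n : nat) :
  (forall k, (1 <= k <= n)%nat -> f k = g k) -> sumR f n = sumR g n.
Proof.
  induction n as [|n IH]; intros Hfg; simpl; [reflexivity|].
  rewrite IH by (intros; apply Hfg; lia). rewrite Hfg by lia. reflexivity.
Qed.

Lemma sumR_plus (f g : nat -> R) (n : nat) :
  sumR (fun k => f k + g k) n = sumR f n + sumR g n.
Proof. induction n as [|n IH]; simpl; [lra|]. rewrite IH. lra. Qed.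

Lemma sumR_scal (c : R) (f : nat -> R) (n : nat) :
  sumR (fun k => c * f k) n = c * sumR f n.
Proof. induction n as [|n IH]; simpl; [lra|]. rewrite IH. lra. Qed.

Lemma sumR_zero (n : nat) : sumR (fun _ => 0) n = 0.
Proof. induction n as [|n IH]; simpl; [lra|]. rewrite IH. lra. Qed.

Lemma sumR_le (f g : nat -> R) (n : nat) :
  (forall k, (1 <= k <= n)%nat -> f k <= g k) -> sumR f n <= sumR g n.
Proof.
  induction n as [|n IH]; intros Hfg; simpl; [lra|].
  pose proof (IH (fun k Hk => Hfg k ltac:(lia))). pose proof (Hfg (S n) ltac:(lia)). lra.
Qed.

Lemma sumR_swap (g : nat -> nat -> R) (m n : nat) :
  sumR (fun i => sumR (g i) m) n = sumR (fun k => sumR (fun i => g i k) n) m.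
Proof.
  induction n as [|n IH]; simpl; [now rewrite sumR_zero|].
  rewrite IH, <- sumR_plus. reflexivity.
Qed.

Lemma sumR_single (p : nat) (c : R) (n : nat) :
  (1 <= p <= n)%nat -> sumR (fun i => if Nat.eqb p i then c else 0) n = c.
Proof.
  induction n as [|n IH]; intros Hp; simpl; [lia|].
  destruct (Nat.eqb_spec p (S n)) as [->|Hne].
  - rewrite (sumR_ext _ (fun _ => 0)), sumR_zero; [lra|].
    intros k Hk. destruct (Nat.eqb_spec (S n) k); [lia|reflexivity].
  - rewrite IH by lia. lra.
Qed.

Lemma sumR_split_first (f : nat -> R) (n : nat) :
  (1 <= n)%nat -> sumR f n = f 1%nat + sumR (fun k => if (2 <=? k)%nat then f k else 0) n.
Proof.
  induction n as [|n IH]; intros Hn; [lia|].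
  destruct n as [|n]; simpl; [lra|].
  change (sumR f (S n) + f (S (S n))
          = f 1%nat + (sumR (fun k => if (2 <=? k)%nat then f k else 0) (S n) + f (S (S n)))).
  rewrite IH by lia. lra.
Qed.

Lemma pigeonhole (f : nat -> nat) (n m : nat) :
  (m < n)%nat -> (forall t, (t < n)%nat -> (f t < m)%nat) ->
  exists a b, (a < b < n)%nat /\ f a = f b.
Proof.
  intros Hmn Hf. apply NNPP. intros Hinj.
  assert (Hnodup : NoDup (map f (seq 0 n))).
  { apply NoDup_map_NoDup_ForallPairs; [|apply seq_NoDup].
    intros a b Ha Hb Hab. apply in_seq in Ha, Hb.
    destruct (lt_eq_lt_dec a b) as [[Hlt|Heq]|Hgt]; [| exact Heq |];
      exfalso; apply Hinj; [exists a, b | exists b, a]; split; auto; lia. }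
  assert (Hincl : incl (map f (seq 0 n)) (seq 0 m)).
  { intros x Hx. apply in_map_iff in Hx. destruct Hx as [t [<- Ht]].
    apply in_seq in Ht. apply in_seq. specialize (Hf t ltac:(lia)). lia. }
  pose proof (NoDup_incl_length Hnodup Hincl) as Hlen.
  rewrite length_map, !length_seq in Hlen. lia.
Qed.

Lemma is_child_spec (par : nat -> nat) (i k : nat) :
  is_child par i k = true -> (2 <= k)%nat /\ par k = i.
Proof.
  unfold is_child. intros Hc. apply andb_prop in Hc as [H2 Hp].
  split; [apply Nat.leb_le | apply Nat.eqb_eq]; assumption.
Qed.

(* [k] descends from [i] in [h] steps, never passing through the root
   (whose value of [par] is meaningless). *)
Definition descends (par : nat -> nat) (h k i : nat) : Prop :=
  Nat.iter h par k = i /\ forall t, (t < h)%nat -> (2 <= Nat.iter t par k)%nat.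

Lemma descends_child (par : nat -> nat) (h k i j : nat) :
  descends par h k j -> is_child par i j = true -> descends par (S h) k i.
Proof.
  intros [Hit Hnr] Hc. apply is_child_spec in Hc as [Hj Hpj]. split.
  - rewrite Nat.iter_succ, Hit. exact Hpj.
  - intros t Ht. destruct (Nat.eq_dec t h) as [-> |]; [rewrite Hit; exact Hj|].
    apply Hnr. lia.
Qed.

Definition height_lt (d : nat) (par : nat -> nat) (h i : nat) : Prop :=
  forall k, (1 <= k <= d)%nat -> ~ descends par h k i.

Lemma height_lt_0 (d : nat) (par : nat -> nat) (i : nat) :
  (1 <= i <= d)%nat -> ~ height_lt d par 0 i.
Proof. intros Hi Hh. apply (Hh i Hi). split; [reflexivity | intros; lia]. Qed.

Lemma height_lt_child (d : nat) (par : nat -> nat) (h i j : nat) :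
  height_lt d par (S h) i -> is_child par i j = true -> height_lt d par h j.
Proof. intros Hh Hc k Hk Hdesc. exact (Hh k Hk (descends_child par h k i j Hdesc Hc)). Qed.

Lemma Lam_fuel_stable (d : nat) (par : nat -> nat) (lam : R) (mu : nat -> nat -> R) :
  forall m j n n', Nat.iter m par j = 1%nat -> (m <= n)%nat -> (m <= n')%nat ->
  Lam_fuel n d par lam mu j = Lam_fuel n' d par lam mu j.
Proof.
  induction m as [|m IH]; intros j n n' Hj Hn Hn'.
  - simpl in Hj. subst j. destruct n, n'; reflexivity.
  - destruct n as [|n]; [lia|]. destruct n' as [|n']; [lia|]. simpl.
    destruct (Nat.eqb j 1); [reflexivity|].
    rewrite (IH (par j) n n'); [reflexivity | | lia | lia].
    rewrite <- Nat.iter_succ_r. exact Hj.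
Qed.

Lemma M_fuel_stable (d : nat) (par : nat -> nat) (lam : R) (mu : nat -> nat -> R)
    (b : nat -> bool) :
  forall h i n n', (1 <= i <= d)%nat -> height_lt d par h i -> (h <= n)%nat -> (h <= n')%nat ->
  M_fuel n d par lam mu b i = M_fuel n' d par lam mu b i.
Proof.
  induction h as [|h IH]; intros i n n' Hi Hh Hn Hn'.
  - exfalso. exact (height_lt_0 d par i Hi Hh).
  - destruct n as [|n]; [lia|]. destruct n' as [|n']; [lia|]. simpl.
    destruct (b i); [reflexivity|]. do 2 f_equal. apply sumR_ext. intros k Hk.
    destruct (is_child par i k) eqn:Hc; [|reflexivity].
    apply IH; [exact Hk | exact (height_lt_child d par h i k Hh Hc) | lia | lia].
Qed.

Definition subtree_rate (d : nat) (par : nat -> nat) (lam : R) (mu : nat -> nat -> R)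
    (b : nat -> bool) (i : nat) : R :=
  sumR (fun k => if is_child par i k then Meff d par lam mu b k else 0) d + mu'0 d par lam mu i.

Section Tree.

Variables (d : nat) (par : nat -> nat).
Hypothesis Hpar : forall j, (2 <= j <= d)%nat -> (1 <= par j <= d)%nat.
Hypothesis Hroot : forall j, (1 <= j <= d)%nat -> exists n, Nat.iter n par j = 1%nat.

(* Every node reaches the root in fewer than [d] steps: otherwise the first
   [d] ancestors would be non-root nodes, two of them would coincide, and the
   walk would cycle without reaching the root any earlier. *)
Lemma depth_lt_d (j : nat) :
  (1 <= j <= d)%nat -> exists m, (m < d)%nat /\ Nat.iter m par j = 1%nat.
Proof.
  intros Hj.
  destruct (dec_inh_nat_subset_has_unique_least_element (fun n => Nat.iter n par j = 1%nat))
    as [n [[Hn Hmin] _]].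
  { intros n. destruct (Nat.eq_dec (Nat.iter n par j) 1); auto. }
  { exact (Hroot j Hj). }
  exists n. split; [|exact Hn].
  destruct (Nat.lt_ge_cases n d) as [Hlt|Hge]; [exact Hlt|exfalso].
  assert (Hnot_root : forall t, (t < n)%nat -> Nat.iter t par j <> 1%nat).
  { intros t Ht E. specialize (Hmin t E). lia. }
  assert (Hnode : forall t, (t <= n)%nat -> (1 <= Nat.iter t par j <= d)%nat).
  { induction t as [|t IH]; intros Ht; simpl; [lia|].
    pose proof (IH ltac:(lia)). pose proof (Hnot_root t ltac:(lia)). apply Hpar. lia. }
  assert (Hnonroot : forall t, (t < n)%nat -> (2 <= Nat.iter t par j)%nat).
  { intros t Ht. pose proof (Hnode t ltac:(lia)). pose proof (Hnot_root t Ht). lia. }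
  (* Two of the first [d] ancestors, all in [2..d], coincide. *)
  destruct (pigeonhole (fun t => Nat.iter t par j - 2)%nat d (d - 1)) as [a [b [Hab Hcoll]]].
  { lia. }
  { intros t Ht. pose proof (Hnode t ltac:(lia)). pose proof (Hnonroot t ltac:(lia)). lia. }
  assert (Hab_eq : Nat.iter a par j = Nat.iter b par j).
  { pose proof (Hnonroot a ltac:(lia)). pose proof (Hnonroot b ltac:(lia)). lia. }
  (* Skipping the cycle between [a] and [b] reaches the root earlier than [n]. *)
  assert (Hshort : Nat.iter (n - b + a) par j = 1%nat).
  { rewrite Nat.iter_add, Hab_eq, <- Nat.iter_add. replace (n - b + b)%nat with n by lia. exact Hn. }
  specialize (Hmin _ Hshort). lia.
Qed.

Lemma height_lt_d (i : nat) : height_lt d par d i.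
Proof.
  intros k Hk [_ Hnr]. destruct (depth_lt_d k Hk) as [m [Hm Hroot_m]].
  specialize (Hnr m Hm). lia.
Qed.

Lemma tree_ind (P : nat -> Prop) :
  (forall i, (1 <= i <= d)%nat ->
     (forall k, (1 <= k <= d)%nat -> is_child par i k = true -> P k) -> P i) ->
  forall i, (1 <= i <= d)%nat -> P i.
Proof.
  intros Hstep.
  assert (Hh : forall h i, (1 <= i <= d)%nat -> height_lt d par h i -> P i).
  { induction h as [|h IH]; intros i Hi Hh; [exfalso; exact (height_lt_0 d par i Hi Hh)|].
    apply Hstep; [exact Hi|]. intros k Hk Hc. apply IH; [exact Hk|].
    exact (height_lt_child d par h i k Hh Hc). }
  intros i Hi. exact (Hh d i Hi (height_lt_d i)).
Qed.

Lemma sum_over_children (f : nat -> R) :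
  sumR (fun i => sumR (fun k => if is_child par i k then f k else 0) d) d
  = sumR (fun k => if (2 <=? k)%nat then f k else 0) d.
Proof.
  rewrite sumR_swap. apply sumR_ext. intros k Hk.
  unfold is_child. destruct (2 <=? k)%nat eqn:E; simpl; [|apply sumR_zero].
  apply Nat.leb_le in E. apply sumR_single, Hpar. lia.
Qed.


Lemma Lam_rec (lam : R) (mu : nat -> nat -> R) (j : nat) :
  (2 <= j <= d)%nat ->
  Lam d par lam mu j = Lam d par lam mu (par j) * mu (par j) j / mutot d par mu (par j).
Proof.
  intros Hj. destruct (depth_lt_d j ltac:(lia)) as [[|m] [Hm Hit]]; [simpl in Hit; lia|].
  unfold Lam. destruct d as [|d']; [lia|]. cbn [Lam_fuel].
  replace (Nat.eqb j 1) with false by (symmetry; apply Nat.eqb_neq; lia).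
  rewrite (Lam_fuel_stable (S d') par lam mu m (par j) d' (S d')); [reflexivity | | lia | lia].
  rewrite <- Nat.iter_succ_r. exact Hit.
Qed.

Lemma Meff_rec (lam : R) (mu : nat -> nat -> R) (b : nat -> bool) (i : nat) :
  (1 <= i <= d)%nat ->
  Meff d par lam mu b i =
    if b i then mutot d par mu i else Rmin (mutot d par mu i) (subtree_rate d par lam mu b i).
Proof.
  intros Hi. pose proof (height_lt_d i) as Hh.
  unfold Meff, subtree_rate. destruct d as [|d']; [lia|]. cbn [M_fuel].
  destruct (b i); [reflexivity|]. do 2 f_equal. apply sumR_ext. intros k Hk.
  destruct (is_child par i k) eqn:Hc; [|reflexivity].
  apply (M_fuel_stable (S d') par lam mu b d'); [exact Hk | | lia | lia].
  exact (height_lt_child (S d') par d' i k Hh Hc).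
Qed.

End Tree.

(* If [N <= 1] then [-2 log N >= 0]; Stdlib's [ln] is [0] on nonpositive arguments. *)
Lemma neg2_ln_nonneg (N : R) : N <= 1 -> 0 <= -2 * ln N.
Proof.
  intros HN. destruct (Rlt_dec 0 N) as [Hpos|Hnpos].
  - destruct (Rle_lt_or_eq_dec N 1 HN) as [Hlt | ->]; [|rewrite ln_1; lra].
    pose proof (ln_increasing N 1 Hpos Hlt). rewrite ln_1 in *. lra.
  - unfold ln. destruct (Rlt_dec 0 N); [contradiction | lra].
Qed.

Section Network.

Variables (d : nat) (par : nat -> nat) (lam : R) (mu : nat -> nat -> R) (b : nat -> bool).
Hypothesis Hd : (1 <= d)%nat.
Hypothesis Hpar : forall j, (2 <= j <= d)%nat -> (1 <= par j <= d)%nat.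
Hypothesis Hroot : forall j, (1 <= j <= d)%nat -> exists n, Nat.iter n par j = 1%nat.
Hypothesis Hlam : 0 < lam.
Hypothesis Hedge : forall j, (2 <= j <= d)%nat -> 0 < mu (par j) j.
Hypothesis Hmupos : forall i, (1 <= i <= d)%nat -> 0 < mutot d par mu i.
Hypothesis Hrho : forall i, (1 <= i <= d)%nat -> rho d par lam mu i < 1.

Local Notation L := (Lam d par lam mu).
Local Notation mt := (mutot d par mu).
Local Notation M := (Meff d par lam mu b).
Local Notation Sub := (subtree_rate d par lam mu b).
Local Notation q := (eff_grad d par lam mu b).

Lemma Lam_root : L 1%nat = lam.
Proof. unfold Lam. case d; reflexivity. Qed.

Lemma Lam_pos (j : nat) : (1 <= j <= d)%nat -> 0 < L j.
Proof.
  intros Hj. destruct (Hroot j Hj) as [n Hn]. revert j Hj Hn.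
  induction n as [|n IH]; intros j Hj Hn.
  - simpl in Hn. subst j. rewrite Lam_root. exact Hlam.
  - destruct (Nat.eq_dec j 1) as [-> | Hj1]; [rewrite Lam_root; exact Hlam|].
    rewrite (Lam_rec d par Hpar Hroot) by lia.
    apply Rdiv_lt_0_compat; [apply Rmult_lt_0_compat|].
    + apply IH; [apply Hpar; lia|]. rewrite <- Nat.iter_succ_r. exact Hn.
    + apply Hedge. lia.
    + apply Hmupos, Hpar. lia.
Qed.

Lemma flow_balance (i : nat) :
  (1 <= i <= d)%nat ->
  L i = sumR (fun k => if is_child par i k then L k else 0) d + mu'0 d par lam mu i.
Proof.
  intros Hi.
  rewrite (sumR_ext _ (fun k => L i / mt i * (if is_child par i k then mu i k else 0))).
  2:{ intros k Hk. destruct (is_child par i k) eqn:Hc; [|lra].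
      apply is_child_spec in Hc as [Hk2 <-]. rewrite (Lam_rec d par Hpar Hroot) by lia.
      unfold Rdiv. ring. }
  rewrite sumR_scal. unfold mu'0. pose proof (Hmupos i Hi) as Hmt. unfold mutot in *. field. lra.
Qed.

(* Summing the flow balance over all nodes: the total exit flow equals [lam]. *)
Lemma exit_flow_total : sumR (mu'0 d par lam mu) d = lam.
Proof.
  assert (Htot : sumR L d = sumR (fun k => if (2 <=? k)%nat then L k else 0) d
                            + sumR (mu'0 d par lam mu) d).
  { rewrite <- (sum_over_children d par Hpar), <- sumR_plus.
    apply sumR_ext. intros i Hi. apply flow_balance. exact Hi. }
  rewrite (sumR_split_first _ d Hd), Lam_root in Htot. lra.
Qed.

Lemma Lam_le_mutot (i : nat) : (1 <= i <= d)%nat -> L i <= mt i.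
Proof.
  intros Hi. pose proof (Hrho i Hi) as Hr. pose proof (Hmupos i Hi) as Hmt. unfold rho in Hr.
  apply Rmult_lt_compat_r with (r := mt i) in Hr; [|exact Hmt].
  replace (L i / mt i * mt i) with (L i) in Hr by (field; lra). lra.
Qed.

Lemma Lam_le_Meff (i : nat) : (1 <= i <= d)%nat -> L i <= M i.
Proof.
  revert i. apply (tree_ind d par Hpar Hroot (fun i => L i <= M i)). intros j Hj IH.
  rewrite (Meff_rec d par Hpar Hroot) by exact Hj.
  destruct (b j); [apply Lam_le_mutot; exact Hj|].
  apply Rmin_glb; [apply Lam_le_mutot; exact Hj|].
  rewrite (flow_balance j Hj). unfold subtree_rate. apply Rplus_le_compat_r, sumR_le.
  intros k Hk. destruct (is_child par j k) eqn:Hc; [apply IH; assumption | lra].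
Qed.

Lemma Meff_pos (i : nat) : (1 <= i <= d)%nat -> 0 < M i.
Proof. intros Hi. pose proof (Lam_pos i Hi). pose proof (Lam_le_Meff i Hi). lra. Qed.

Lemma exp_half_grad (i : nat) : (1 <= i <= d)%nat -> exp (q i / 2) = L i / M i.
Proof.
  intros Hi. unfold eff_grad. replace (2 * ln (L i / M i) / 2) with (ln (L i / M i)) by field.
  apply exp_ln, Rdiv_lt_0_compat; [apply Lam_pos | apply Meff_pos]; exact Hi.
Qed.

Lemma root_term : lam * exp (- q 1%nat / 2) = M 1%nat.
Proof.
  replace (- q 1%nat / 2) with (- (q 1%nat / 2)) by field.
  rewrite exp_Ropp, exp_half_grad, Lam_root by lia.
  pose proof (Meff_pos 1%nat ltac:(lia)). field. lra.
Qed.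

Lemma edge_term (i j : nat) :
  (1 <= i <= d)%nat -> (1 <= j <= d)%nat -> is_child par i j = true ->
  mu i j * exp ((q i - q j) / 2) = mt i / M i * M j.
Proof.
  intros Hi Hj Hc. apply is_child_spec in Hc as [Hj2 Hpj].
  replace ((q i - q j) / 2) with (q i / 2 + - (q j / 2)) by field.
  rewrite exp_plus, exp_Ropp, !exp_half_grad by assumption.
  rewrite (Lam_rec d par Hpar Hroot lam mu j) by lia. rewrite Hpj.
  pose proof (Lam_pos i Hi). pose proof (Meff_pos i Hi). pose proof (Meff_pos j Hj).
  pose proof (Hmupos i Hi). pose proof (Hedge j ltac:(lia)) as Hmuij. rewrite Hpj in Hmuij.
  field. repeat split; lra.
Qed.

Lemma exit_term (i : nat) :
  (1 <= i <= d)%nat -> mu i 0%nat * exp (q i / 2) = mt i / M i * mu'0 d par lam mu i.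
Proof.
  intros Hi. rewrite exp_half_grad by exact Hi. unfold mu'0.
  pose proof (Meff_pos i Hi). pose proof (Hmupos i Hi). field. lra.
Qed.

Definition node_term (b' : nat -> bool) (i : nat) : R :=
  if b' i then mt i / M i * Sub i else mt i.

Lemma Nb_eff_grad (b' : nat -> bool) :
  Nb d par lam mu b' q = M 1%nat + sumR (node_term b') d.
Proof.
  unfold Nb. rewrite root_term, !Rplus_assoc, <- !sumR_plus. f_equal.
  apply sumR_ext. intros i Hi. unfold node_term, subtree_rate.
  destruct (b' i); [|lra].
  rewrite exit_term, Rmult_plus_distr_l, <- sumR_scal by exact Hi.
  rewrite (sumR_ext _ (fun k => mt i / M i * (if is_child par i k then M k else 0))); [lra|].
  intros k Hk. destruct (is_child par i k) eqn:Hc; [apply edge_term; assumption | lra].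
Qed.

(* Key local inequality: node_term <= mu_i + (subtree rate) - M_i(b).  It is an
   equality when [i] is nonempty in [b'], by the choice of M_i(b) as a minimum. *)
Lemma node_term_bound (b' : nat -> bool) (i : nat) :
  (1 <= i <= d)%nat -> (b i = true -> b' i = true) ->
  node_term b' i <= mt i + Sub i - M i.
Proof.
  intros Hi Hbb. unfold node_term.
  pose proof (Meff_rec d par Hpar Hroot lam mu b i Hi) as HM.
  pose proof (Meff_pos i Hi) as HMpos. pose proof (Hmupos i Hi) as Hmt.
  destruct (b' i) eqn:Hb'.
  - assert (Hcases : M i = mt i \/ M i = Sub i).
    { destruct (b i); [left; exact HM|]. rewrite HM. unfold Rmin.
      destruct (Rle_dec (mt i) (Sub i)); auto. }
    destruct Hcases as [Heq|Heq]; rewrite Heq in *.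
    + replace (mt i / mt i * Sub i) with (Sub i) by (field; lra). lra.
    + replace (mt i / Sub i * Sub i) with (mt i) by (field; lra). lra.
  - destruct (b i); [discriminate (Hbb eq_refl)|].
    rewrite HM. pose proof (Rmin_r (mt i) (Sub i)). lra.
Qed.

(* Every non-root effective rate appears once as a child rate: the subtree
   rates add up to the non-root effective rates plus the total exit flow. *)
Lemma total_subtree_rate :
  sumR Sub d = sumR (fun k => if (2 <=? k)%nat then M k else 0) d + lam.
Proof.
  unfold subtree_rate. rewrite sumR_plus, (sum_over_children d par Hpar), exit_flow_total.
  reflexivity.
Qed.

(* Telescoping the local inequalities: N_b'(q) <= lam + sum_i mu_i. *)
Lemma Nb_eff_grad_le (b' : nat -> bool) :
  (forall i, (1 <= i <= d)%nat -> b i = true -> b' i = true) ->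
  Nb d par lam mu b' q <= lam + sumR mt d.
Proof.
  intros Hbb. rewrite Nb_eff_grad.
  assert (Hsum : sumR (node_term b') d <= sumR (fun i => mt i + Sub i - M i) d).
  { apply sumR_le. intros i Hi. apply node_term_bound; auto. }
  unfold Rminus in Hsum.
  rewrite !sumR_plus, (sumR_ext (fun i => - M i) (fun i => -1 * M i)), sumR_scal in Hsum
    by (intros; ring).
  rewrite total_subtree_rate, (sumR_split_first M d Hd) in Hsum. lra.
Qed.

End Network.

Theorem mainTheorem3
  (d : nat) (par : nat -> nat) (lam : R) (mu : nat -> nat -> R)
  (Hd : (1 <= d)%nat)
  (Hpar : forall j, (2 <= j <= d)%nat -> (1 <= par j <= d)%nat)
  (Hroot : forall j, (1 <= j <= d)%nat -> exists n, Nat.iter n par j = 1%nat)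
  (Hlam : 0 < lam)
  (Hedge : forall j, (2 <= j <= d)%nat -> 0 < mu (par j) j)
  (Hexit : forall i, (1 <= i <= d)%nat -> 0 <= mu i 0%nat)
  (Hmupos : forall i, (1 <= i <= d)%nat -> 0 < mutot d par mu i)
  (Hrho : forall i, (1 <= i <= d)%nat -> rho d par lam mu i < 1)
  (Hnorm : lam + sumR (mutot d par mu) d = 1)
  (b : nat -> bool) :
  forall b' : nat -> bool,
    (forall i, (1 <= i <= d)%nat -> b i = true -> b' i = true) ->
    0 <= Hb d par lam mu b' (eff_grad d par lam mu b).
Proof.
  intros b' Hbb. apply neg2_ln_nonneg. rewrite <- Hnorm.
  exact (Nb_eff_grad_le d par lam mu b Hd Hpar Hroot Hlam Hedge Hmupos Hrho b' Hbb).
Qed.
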